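(* Let $\mathcal T=LI([0,1])\cup\mathcal K$ be the extension of linear arithmetic over the real interval $[0,1]$ by a unary function symbol $f$ satisfying $\mathcal K=\{\forall x,y\,(x\le y\to f(x)\le f(y)),\ \forall x\,(f(x)\le 1)\}$, with $f$ uninterpreted and the arithmetic symbols interpreted. Let $G=(a\le b)\wedge(b\le f(b))$ with constants $a,b$. Then $G\models_{\mathcal T}a\le f^n(1)$ for every $n\in\mathbb N$, and no (finite) quantifier-free formula is a $\mathcal T$-general uniform interpolant of $G$ w.r.t. $\Sigma_s\cup C_s$ with $\Sigma_s=\{f\}$, $C_s=\{a\}$.
   Context: General uniform interpolant: for a theory $\mathcal T$ whose signature splits into interpreted symbols $\Pi_0$ and uninterpreted function symbols, a quantifier-free formula $\phi$ with additional constants $C$, and sets $\Sigma_s$, $C_s$ of uninterpreted function symbols and constants occurring in $\phi$: a quantifier-free formula $\psi$ over $\Pi_0\cup\Sigma_s$ with constants only from $C_s$ is a $\mathcal T$-general uniform interpolant of $\phi$ w.r.t. $\Sigma_s\cup C_s$ if $\phi\models_{\mathcal T}\psi$ and for every ground $\theta$ sharing with $\phi$ only $\Pi_0$-symbols, symbols of $\Sigma_s$ and constants of $C_s$, $\phi\models_{\mathcal T}\theta$ implies $\psi\models_{\mathcal T}\theta$. $f^n$ denotes $n$-fold iteration of $f$. *)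

From HB Require Import structures.
From mathcomp Require Import all_boot all_order all_algebra.
From mathcomp Require Import reals.
Set Implicit Arguments. Unset Strict Implicit. Unset Printing Implicit Defensive.
Import Order.TTheory GRing.Theory Num.Theory.
Local Open Scope ring_scope.

Definition unit_rat := {q : rat | (0 <= q <= 1)%R}.

Inductive term : Type :=
| Cst of nat
| TNum of unit_rat
| App of term.

Record lexpr : Type := LExpr { lx_terms : seq (rat * term); lx_const : rat }.

Inductive formula : Type :=
| FTrue | FFalse
| FLe of lexpr & lexpr
| FLt of lexpr & lexpr
| FEq of lexpr & lexpr
| FNot of formula
| FAnd of formula & formula
| FOr of formula & formula.

(* Models of T = LI([0,1]) u K: the arithmetic is the standard one on [0,1],
   f is interpreted by a function [0,1] -> [0,1] satisfying K, and the free
   constants are interpreted by elements of [0,1]. *)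
Record model (R : realType) : Type := Model {
  mf : R -> R;
  mc : nat -> R;
  mf_dom : forall x, 0 <= x <= 1 -> 0 <= mf x;
  mf_le1 : forall x, 0 <= x <= 1 -> mf x <= 1;
  mf_mono : forall x y, 0 <= x <= 1 -> 0 <= y <= 1 -> x <= y -> mf x <= mf y;
  mc_dom : forall i, 0 <= mc i <= 1
}.

Fixpoint eval_term (R : realType) (M : model R) (t : term) : R :=
  match t with
  | Cst i => mc M i
  | TNum q => ratr (sval q)
  | App u => mf M (eval_term M u)
  end.

Definition eval_lexpr (R : realType) (M : model R) (e : lexpr) : R :=
  \sum_(p <- lx_terms e) ratr p.1 * eval_term M p.2 + ratr (lx_const e).

Fixpoint holds (R : realType) (M : model R) (phi : formula) : Prop :=
  match phi with
  | FTrue => True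
  | FFalse => False
  | FLe e1 e2 => eval_lexpr M e1 <= eval_lexpr M e2
  | FLt e1 e2 => eval_lexpr M e1 < eval_lexpr M e2
  | FEq e1 e2 => eval_lexpr M e1 = eval_lexpr M e2
  | FNot p => ~ holds M p
  | FAnd p q => holds M p /\ holds M q
  | FOr p q => holds M p \/ holds M q
  end.

Definition entails (R : realType) (phi psi : formula) : Prop :=
  forall M : model R, holds M phi -> holds M psi.

Fixpoint consts_term (t : term) : seq nat :=
  match t with
  | Cst i => [:: i]
  | TNum _ => [::]
  | App u => consts_term u
  end.

Definition consts_lexpr (e : lexpr) : seq nat :=
  flatten [seq consts_term p.2 | p <- lx_terms e].

Fixpoint consts (phi : formula) : seq nat :=
  match phi with
  | FTrue | FFalse => [::]
  | FLe e1 e2 | FLt e1 e2 | FEq e1 e2 => consts_lexpr e1 ++ consts_lexpr e2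
  | FNot p => consts p
  | FAnd p q | FOr p q => consts p ++ consts q
  end.

(* T-general uniform interpolant of phi w.r.t. Sigma_s u C_s, where
   Sigma_s = {f} (the only uninterpreted function symbol, so no restriction on
   function symbols is needed) and C_s is given as a list of constant indices. *)
Definition general_uniform_interpolant (R : realType)
    (phi : formula) (Cs : seq nat) (psi : formula) : Prop :=
  {subset consts psi <= Cs} /\
  entails R phi psi /\
  forall theta : formula,
    (forall i, i \in consts theta -> i \in consts phi -> i \in Cs) ->
    entails R phi theta -> entails R psi theta.

Definition lx_of (t : term) : lexpr := LExpr [:: (1%R, t)] 0%R.
Definition atom_le (t u : term) : formula := FLe (lx_of t) (lx_of u).
Definition one_num : unit_rat := exist _ 1%R (erefl true).
Definition f_iter (n : nat) (t : term) : term := iter n App t.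

From HB Require Import structures.
From mathcomp Require Import all_boot all_order all_algebra.
From mathcomp Require Import reals.
From mathcomp Require Import ring lra.
Set Implicit Arguments. Unset Strict Implicit. Unset Printing Implicit Defensive.
Import Order.TTheory GRing.Theory Num.Theory.
Local Open Scope ring_scope.

(* Monotonicity turns [b <= f b] into [b <= f^n b <= f^n 1], so [G] entails
   [a <= f^n 1] for all [n].  A uniform interpolant [psi] would entail all of
   these as well.  Consider the models with [a = 1/4], [b = L] and
   [f x = 0] for [x < m], [f x = (x + L)/2] otherwise.  For [m = L] the point
   [b] is fixed, so [G] and hence [psi] hold.  The finitely many arguments at
   which [psi] evaluates [f] all differ from [L] once [L] avoids the numerals
   of [psi], so [m] can be raised slightly above [L] without changing the
   truth of [psi]; but then [f^n 1], which decreases towards [L], eventually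
   falls below [m] and [f^(n+1) 1 = 0 < a]. *)

Section RealLemmas.
Variable R : realFieldType.

Lemma exists_notin_itv (s : seq R) (lo hi : R) : lo < hi ->
  exists2 x, lo < x < hi & x \notin s.
Proof.
move=> lt_lohi; pose c (j : nat) := lo + (hi - lo) / j.+2%:R.
have c_inj : injective c.
  have hilo_neq0 : hi - lo != 0 by rewrite subr_eq0 gt_eqF.
  by move=> j k /addrI /(mulfI hilo_neq0) /invr_inj /eqP; rewrite eqr_nat => /eqP[].
have : ~~ all (mem s) (map c (iota 0 (size s).+1)).
  apply/negP => /allP sub.
  have c_uniq : uniq (map c (iota 0 (size s).+1)) by rewrite map_inj_uniq ?iota_uniq.
  have := uniq_leq_size c_uniq sub.
  by rewrite size_map size_iota ltnn.
case/allPn => _ /mapP[j _ ->] cj_notin; exists (c j) => //.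
have j2_gt1 : 1 < j.+2%:R :> R by rewrite ltr1n.
rewrite /c; set d := _ / _.
have : d < hi - lo by rewrite ltr_pdivrMr ?ltr_pMr ?subr_gt0 // (lt_trans ltr01).
have : 0 < d by rewrite divr_gt0 ?subr_gt0 // (lt_trans ltr01).
by move=> *; apply/andP; split; lra.
Qed.

Lemma exists_gap (s : seq R) (L : R) : L \notin s ->
  exists2 m, L < m & forall x, x \in s -> (x < L) || (m <= x).
Proof.
elim: s => [|y s IH]; first by exists (L + 1) => //; lra.
rewrite inE negb_or => /andP[yL /IH[m ltLm gap]].
have [ltLy | leyL] := ltP L y.
- exists (Order.min m y); first by rewrite lt_min ltLm.
  move=> x; rewrite inE => /predU1P[->|/gap/orP[->//|lemx]].
    by rewrite ge_min lexx !orbT.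
  by rewrite ge_min lemx orbT.
- exists m => // x; rewrite inE => /predU1P[->|/gap//].
  by rewrite lt_neqAle eq_sym yL leyL.
Qed.

End RealLemmas.

Fixpoint term_code (t : term) : (nat + unit_rat) * nat :=
  match t with
  | Cst i => (inl i, 0%N)
  | TNum q => (inr q, 0%N)
  | App u => let: (l, k) := term_code u in (l, k.+1)
  end.

Definition term_decode (c : (nat + unit_rat) * nat) : term :=
  let: (l, k) := c in iter k App (match l with inl i => Cst i | inr q => TNum q end).

Lemma term_codeK : cancel term_code term_decode.
Proof. by elim=> // u /=; case: (term_code u) => l k /= <-. Qed.

HB.instance Definition _ := Equality.copy term (can_type term_codeK).

Definition lterms (e : lexpr) : seq term := [seq p.2 | p <- lx_terms e].

Fixpoint fterms (phi : formula) : seq term :=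
  match phi with
  | FTrue | FFalse => [::]
  | FLe e1 e2 | FLt e1 e2 | FEq e1 e2 => lterms e1 ++ lterms e2
  | FNot p => fterms p
  | FAnd p q | FOr p q => fterms p ++ fterms q
  end.

Fixpoint numerals (t : term) : seq rat :=
  match t with
  | Cst _ => [::]
  | TNum q => [:: sval q]
  | App u => numerals u
  end.

Definition fnumerals (phi : formula) : seq rat :=
  flatten [seq numerals t | t <- fterms phi].

Lemma consts_fterms (phi : formula) (t : term) :
  t \in fterms phi -> {subset consts_term t <= consts phi}.
Proof.
have lexprP e : t \in lterms e -> {subset consts_term t <= consts_lexpr e}.
  by move=> /mapP[p p_e ->] i i_t; apply/flatten_mapP; exists p.
elim: phi => //= [e1 e2|e1 e2|e1 e2|p IHp q IHq|p IHp q IHq];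
  rewrite mem_cat => /orP[t_l|t_r] i i_t; rewrite mem_cat;
  by [rewrite (lexprP _ t_l) | rewrite (lexprP _ t_r) ?orbT
     | rewrite IHp | rewrite IHq ?orbT].
Qed.

Lemma f_iterS (n : nat) (t : term) : f_iter n.+1 t = App (f_iter n t).
Proof. exact: iterS. Qed.

Lemma consts_f_iter (n : nat) (t : term) : consts_term (f_iter n t) = consts_term t.
Proof. by elim: n => // n IH; rewrite f_iterS. Qed.

Section Models.
Variable R : realType.
Implicit Types (M : model R) (t : term) (phi : formula).

Lemma eval_lx_of M t : eval_lexpr M (lx_of t) = eval_term M t.
Proof. by rewrite /eval_lexpr big_seq1 rmorph1 rmorph0 mul1r addr0. Qed.

Lemma holds_atom_le M t u :
  holds M (atom_le t u) <-> eval_term M t <= eval_term M u.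
Proof. by rewrite /= !eval_lx_of. Qed.

Lemma eval_term_itv M t : 0 <= eval_term M t <= 1.
Proof.
elim: t => [i|[q /= /andP[q_ge0 q_le1]]|u IH] /=; first exact: mc_dom.
  by rewrite ler0q q_ge0 -(rmorph1 (ratr : rat -> R)) ler_rat.
by rewrite mf_dom ?mf_le1.
Qed.

Lemma le_f_iter_one M (x : R) (n : nat) : 0 <= x <= 1 -> x <= mf M x ->
  x <= eval_term M (f_iter n (TNum one_num)).
Proof.
move=> x_itv le_x_fx; elim: n => [|n IH]; first by rewrite /= rmorph1; case/andP: x_itv.
rewrite f_iterS /=; apply: le_trans le_x_fx (mf_mono _ _ _ IH) => //; exact: eval_term_itv.
Qed.

(* The arguments at which evaluating [t] applies [f]. *)
Fixpoint targs M t : seq R :=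
  if t is App u then eval_term M u :: targs M u else [::].

Definition fargs M phi : seq R := flatten [seq targs M t | t <- fterms phi].

Lemma eval_term_ext M1 M2 t : mc M1 =1 mc M2 ->
  {in targs M2 t, mf M1 =1 mf M2} -> eval_term M1 t = eval_term M2 t.
Proof.
move=> eq_c; elim: t => [i|q|u IH] /= eq_f; [exact: eq_c | by [] |].
rewrite IH ?eq_f ?mem_head // => x x_u.
by apply: eq_f; rewrite inE x_u orbT.
Qed.

Lemma holds_ext M1 M2 phi :
  {in fterms phi, forall t, eval_term M1 t = eval_term M2 t} ->
  holds M1 phi <-> holds M2 phi.
Proof.
have lexprP e : {in lterms e, forall t, eval_term M1 t = eval_term M2 t} ->
    eval_lexpr M1 e = eval_lexpr M2 e.
  move=> eq_e; rewrite /eval_lexpr; congr (_ + _).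
  by apply: eq_big_seq => p p_e; rewrite eq_e // map_f.
have catP (s1 s2 : seq term) (P : term -> Prop) :
    {in s1 ++ s2, forall t, P t} -> {in s1, forall t, P t} /\ {in s2, forall t, P t}.
  by move=> P12; split=> t t_s; apply: P12; rewrite mem_cat t_s ?orbT.
elim: phi => //= [e1 e2|e1 e2|e1 e2|p IHp|p IHp q IHq|p IHp q IHq];
  do ?[move/catP => [/lexprP -> /lexprP ->] //];
  [by move/IHp -> | |]; by move/catP => [/IHp -> /IHq ->].
Qed.

Lemma eval_term_avoid M (L : R) t :
  (forall x, x != L -> mf M x != L) ->
  {in consts_term t, forall i, mc M i != L} ->
  L \notin map ratr (numerals t) ->
  (eval_term M t != L) && (L \notin targs M t).
Proof.
move=> f_avoid; elim: t => [i|q|u IH] /= c_avoid.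
- by rewrite c_avoid ?mem_head.
- by rewrite mem_seq1 eq_sym andbT.
- by move=> /(IH c_avoid)/andP[uL L_u]; rewrite f_avoid // inE negb_or eq_sym uL.
Qed.

Lemma notin_fargs M (L : R) phi :
  (forall x, x != L -> mf M x != L) ->
  {in consts phi, forall i, mc M i != L} ->
  L \notin map ratr (fnumerals phi) ->
  L \notin fargs M phi.
Proof.
move=> f_avoid c_avoid n_avoid; apply/flatten_mapP => -[t t_phi].
have t_consts : {in consts_term t, forall i, mc M i != L}.
  by move=> i /(consts_fterms t_phi); exact: c_avoid.
have t_nums : L \notin map ratr (numerals t).
  apply: contra n_avoid => /mapP[q q_t ->]; apply: map_f.
  by apply/flatten_mapP; exists t.
by case/andP: (eval_term_avoid f_avoid t_consts t_nums) => _ /negP.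
Qed.

Definition thresh_fun (L m x : R) : R := if x < m then 0 else (x + L) / 2.

Definition thresh_const (L : R) (i : nat) : R := if i == 1%N then L else 1 / 4.

Section Threshold.
Variables (L m : R) (L_ge0 : 0 <= L) (L_le1 : L <= 1).

Fact thresh_fun_ge0 (x : R) : 0 <= x <= 1 -> 0 <= thresh_fun L m x.
Proof. by move: L_ge0 => ? /andP[? ?]; rewrite /thresh_fun; case: ifP => _; lra. Qed.

Fact thresh_fun_le1 (x : R) : 0 <= x <= 1 -> thresh_fun L m x <= 1.
Proof. by move: L_le1 => ? /andP[? ?]; rewrite /thresh_fun; case: ifP => _; lra. Qed.

Fact thresh_fun_mono (x y : R) : 0 <= x <= 1 -> 0 <= y <= 1 -> x <= y ->
  thresh_fun L m x <= thresh_fun L m y.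
Proof.
move: L_ge0 => ? /andP[? ?] /andP[? ?] ?.
by rewrite /thresh_fun; do 2!case: ifP => ?; lra.
Qed.

Fact thresh_const_itv i : 0 <= thresh_const L i <= 1.
Proof.
by move: L_ge0 L_le1 => ? ?; rewrite /thresh_const; case: ifP => _; apply/andP; split; lra.
Qed.

Definition thresh_model : model R :=
  Model thresh_fun_ge0 thresh_fun_le1 thresh_fun_mono thresh_const_itv.

Lemma thresh_f_iter_one_vanishes : L < 1 -> L < m ->
  exists n, eval_term thresh_model (f_iter n (TNum one_num)) = 0.
Proof.
move: L_ge0 => ? ltL1 ltLm.
have orbit k : let v := eval_term thresh_model (f_iter k (TNum one_num)) in
    v = L + (1 - L) / 2 ^+ k \/ v = 0.
  elim: k => [|k IH]; first by rewrite /= rmorph1 expr0 divr1; lra.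
  rewrite f_iterS /= /thresh_fun; case: IH => ->; case: ifP => v_m; try by right.
  - by left; rewrite exprS; field; rewrite expf_neq0 // pnatr_eq0.
  - by move: v_m; rewrite ltNge => /negP[]; lra.
have [K small] : exists K, L + (1 - L) / 2 ^+ K < m.
  pose y := (1 - L) / (m - L).
  have y_ge0 : 0 <= y by rewrite divr_ge0 ?subr_ge0 //; lra.
  exists (Num.bound y).
  suff : (1 - L) / 2 ^+ Num.bound y < m - L by lra.
  rewrite ltr_pdivrMr ?exprn_gt0 // mulrC -ltr_pdivrMr ?subr_gt0 //.
  apply: lt_le_trans (archi_boundP y_ge0) _.
  by rewrite -natrX ler_nat ltnW // ltn_expl.
exists K.+1; rewrite f_iterS /=.
by case: (orbit K) => ->; rewrite /thresh_fun ?small //; case: ifP => //; lra.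
Qed.

End Threshold.

Lemma thresh_fun_avoid (L x : R) : 0 < L -> x != L -> thresh_fun L L x != L.
Proof.
move=> L_gt0; rewrite /thresh_fun neq_lt => /orP[xL|Lx].
  by rewrite xL lt_eqF.
by rewrite ltNge ltW //= gt_eqF //; lra.
Qed.

Lemma thresh_fun_raise (L m x : R) : L < m -> (x < L) || (m <= x) ->
  thresh_fun L m x = thresh_fun L L x.
Proof.
move=> ltLm; rewrite /thresh_fun => /orP[xL|mx]; first by rewrite xL (lt_trans xL ltLm).
by rewrite !ltNge mx (le_trans (ltW ltLm) mx).
Qed.

End Models.

Theorem mainTheorem6 (R : realType) :
  let a := Cst 0 in
  let b := Cst 1 in
  let G := FAnd (atom_le a b) (atom_le b (App b)) in
  (forall n : nat, entails R G (atom_le a (f_iter n (TNum one_num)))) /\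
  ~ (exists psi : formula, general_uniform_interpolant R G [:: 0%N] psi).
Proof.
cbv zeta; set G := FAnd _ _.
have G_entails n : entails R G (atom_le (Cst 0) (f_iter n (TNum one_num))).
  move=> M [/holds_atom_le ab /holds_atom_le bfb]; apply/holds_atom_le.
  by apply: le_trans ab (le_f_iter_one n (mc_dom _ _) bfb).
split=> // -[psi [psi_consts [G_psi psi_min]]].
have [L /andP[gtL ltL1] L_num] :
    exists2 L : R, 1 / 2 < L < 1 & L \notin map ratr (fnumerals psi).
  by apply: exists_notin_itv; lra.
have [L_ge0 L_le1] : 0 <= L /\ L <= 1 by split; lra.
pose M m := thresh_model m L_ge0 L_le1.
have psi_ML : holds (M L) psi.
  apply: G_psi; split; apply/holds_atom_le; rewrite /= /thresh_const /thresh_fun ?ltxx /=; lra.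
have [m ltLm gap] : exists2 m, L < m & forall x, x \in fargs (M L) psi -> (x < L) || (m <= x).
  apply/exists_gap/notin_fargs => [x|i /psi_consts|]; rewrite ?inE //.
    by apply: thresh_fun_avoid; lra.
  by move/eqP->; rewrite /= /thresh_const /= lt_eqF //; lra.
have psi_Mm : holds (M m) psi.
  apply/(holds_ext (M2 := M L)) => // t t_psi; apply: eval_term_ext => // x x_t.
  by apply/thresh_fun_raise/gap => //; apply/flatten_mapP; exists t.
have [n fn0] := thresh_f_iter_one_vanishes L_ge0 L_le1 ltL1 ltLm.
have only_a : forall i, i \in consts (atom_le (Cst 0) (f_iter n (TNum one_num))) ->
    i \in consts G -> i \in [:: 0%N].
  by move=> i; rewrite /= /consts_lexpr /= consts_f_iter.
have /holds_atom_le := psi_min _ only_a (G_entails n) _ psi_Mm.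
by rewrite fn0 /= /thresh_const /=; lra.
Qed.
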